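(* Let $T:X\to Y$ be a bijective linear operator between Archimedean vector lattices, and assume that $X$ has sufficiently many components. Then $T$ is disjointness preserving if and only if $T^{-1}$ satisfies condition $(\beta)$.
   Context: All vector lattices are Archimedean. For a subset $A$ of a vector lattice $X$, $A^d=\{x\in X: |x|\wedge|a|=0 \text{ for all } a\in A\}$ and $A^{dd}=(A^d)^d$. For $a,b\in X$ we write $a\lhd b$ if $\{a\}^{dd}\subseteq\{b\}^{dd}$. A linear operator $S$ satisfies condition $(\beta)$ if $Sa\lhd Sb$ whenever $a\lhd b$. A linear operator is disjointness preserving if it maps disjoint elements to disjoint elements. An element $x'$ is a component of $x$ if $|x'|\wedge|x-x'|=0$. A vector lattice $X$ has sufficiently many components if whenever $x,u\in X$ with $x\notin\{u\}^{dd}$, there exists a nonzero component $x'$ of $x$ with $|x'|\wedge|u|=0$. *)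

From HB Require Import structures.
From mathcomp Require Import all_boot all_order all_algebra.
From mathcomp Require Import reals.
Set Implicit Arguments. Unset Strict Implicit. Unset Printing Implicit Defensive.
Import Order.TTheory GRing.Theory Num.Theory.
Local Open Scope ring_scope.

Record archVL (R : realType) := ArchVL {
  avl_sort :> lmodType R;
  avl_le : avl_sort -> avl_sort -> Prop;
  avl_sup : avl_sort -> avl_sort -> avl_sort;
  avl_le_refl : forall x, avl_le x x;
  avl_le_anti : forall x y, avl_le x y -> avl_le y x -> x = y;
  avl_le_trans : forall x y z, avl_le x y -> avl_le y z -> avl_le x z;
  avl_le_add : forall x y z, avl_le x y -> avl_le (x + z) (y + z);
  avl_le_scale : forall (a : R) x, 0 <= a -> avl_le 0 x -> avl_le 0 (a *: x);
  avl_sup_l : forall x y, avl_le x (avl_sup x y);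
  avl_sup_r : forall x y, avl_le y (avl_sup x y);
  avl_sup_least : forall x y z, avl_le x z -> avl_le y z -> avl_le (avl_sup x y) z;
  avl_archimedean : forall x y : avl_sort,
      (forall n : nat, avl_le (n%:R *: x) y) -> avl_le x 0
}.

Section VLDefs.
Variables (R : realType) (X : archVL R).

Definition vl_inf (x y : X) : X := - avl_sup (- x) (- y).
Definition vl_abs (x : X) : X := avl_sup x (- x).

Definition vl_disjoint (x y : X) : Prop := vl_inf (vl_abs x) (vl_abs y) = 0.

Definition vl_dcomp (A : X -> Prop) : X -> Prop :=
  fun x => forall a, A a -> vl_disjoint x a.

Definition vl_band (a : X) : X -> Prop :=
  vl_dcomp (vl_dcomp (fun z => z = a)).

Definition vl_lhd (a b : X) : Prop := forall x, vl_band a x -> vl_band b x.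

Definition vl_component (x' x : X) : Prop := vl_disjoint x' (x - x').

Definition sufficiently_many_components : Prop :=
  forall x u : X, ~ vl_band u x ->
    exists x' : X, x' <> 0 /\ vl_component x' x /\ vl_disjoint x' u.
End VLDefs.

Definition disjointness_preserving (R : realType) (X Y : archVL R)
  (S : X -> Y) : Prop :=
  forall x y : X, vl_disjoint x y -> vl_disjoint (S x) (S y).

Definition condition_beta (R : realType) (X Y : archVL R) (S : X -> Y) : Prop :=
  forall a b : X, vl_lhd a b -> vl_lhd (S a) (S b).

From mathcomp Require Import all_boot all_order all_algebra.
From mathcomp Require Import reals.
From Stdlib Require Import Classical.
Set Implicit Arguments. Unset Strict Implicit. Unset Printing Implicit Defensive.
Import Order.TTheory GRing.Theory Num.Theory.
Local Open Scope ring_scope.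

(* If T preserves disjointness but T^-1 a is not in {T^-1 b}^dd, a nonzero
   component x' of T^-1 a disjoint from T^-1 b yields p = T x' with p _|_ b,
   hence p _|_ a (as a <| b), and p _|_ a - p; so p _|_ p and p = 0.
   Conversely, if T^-1 satisfies (beta) and x _|_ y, then z = |Tx| /\ |Ty|
   satisfies z <| Tx and z <| Ty, so T^-1 z lies in {x}^dd and {y}^dd; since
   y is in {x}^d, T^-1 z is in {y}^d as well, whence T^-1 z = 0 and z = 0. *)

Section VectorLatticeFacts.
Variables (R : realType) (X : archVL R).
Local Notation le := (@avl_le R X).
Local Notation sup := (@avl_sup R X).
Local Notation inf := (@vl_inf R X).
Local Notation abs := (@vl_abs R X).

Lemma vl_le_addl (x y z : X) : le x y -> le (z + x) (z + y).
Proof. by move=> h; rewrite ![z + _]addrC; apply: avl_le_add. Qed.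

Lemma vl_le_add2 (a b c d : X) : le a b -> le c d -> le (a + c) (b + d).
Proof. by move=> h1 h2; apply: avl_le_trans (avl_le_add c h1) (vl_le_addl b h2). Qed.

Lemma vl_le_opp (x y : X) : le x y -> le (- y) (- x).
Proof.
move=> h; have := avl_le_add (- x - y) h.
by rewrite addrA subrr add0r addrC -addrA addNr addr0.
Qed.

Lemma vl_le_oppP (x y : X) : le (- y) (- x) -> le x y.
Proof. by move/vl_le_opp; rewrite !opprK. Qed.

Lemma vl_supC (x y : X) : sup x y = sup y x.
Proof.
by apply: avl_le_anti; apply: avl_sup_least;
  (apply: avl_sup_l || apply: avl_sup_r).
Qed.

Lemma vl_supDr (x y c : X) : sup (x + c) (y + c) = sup x y + c.
Proof.
apply: avl_le_anti.
  by apply: avl_sup_least; apply: avl_le_add;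
    (apply: avl_sup_l || apply: avl_sup_r).
have h : le (sup x y) (sup (x + c) (y + c) - c).
  apply: avl_sup_least.
    by rewrite -{1}(addrK c x); apply: avl_le_add; apply: avl_sup_l.
  by rewrite -{1}(addrK c y); apply: avl_le_add; apply: avl_sup_r.
by have := avl_le_add c h; rewrite subrK.
Qed.

Lemma vl_inf_l (x y : X) : le (inf x y) x.
Proof. by apply: vl_le_oppP; rewrite /vl_inf opprK; apply: avl_sup_l. Qed.

Lemma vl_inf_r (x y : X) : le (inf x y) y.
Proof. by apply: vl_le_oppP; rewrite /vl_inf opprK; apply: avl_sup_r. Qed.

Lemma vl_inf_greatest (x y z : X) : le z x -> le z y -> le z (inf x y).
Proof.
move=> h1 h2; apply: vl_le_oppP; rewrite /vl_inf opprK.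
by apply: avl_sup_least; apply: vl_le_opp.
Qed.

Lemma vl_infC (x y : X) : inf x y = inf y x.
Proof. by rewrite /vl_inf vl_supC. Qed.

Lemma vl_inf_mono (a a' b b' : X) : le a a' -> le b b' -> le (inf a b) (inf a' b').
Proof.
move=> h1 h2; apply: vl_inf_greatest.
  exact: avl_le_trans (vl_inf_l _ _) h1.
exact: avl_le_trans (vl_inf_r _ _) h2.
Qed.

Lemma vl_infxx (x : X) : inf x x = x.
Proof.
rewrite /vl_inf.
have -> : sup (- x) (- x) = - x.
  by apply: avl_le_anti; [apply: avl_sup_least; apply: avl_le_refl | apply: avl_sup_l].
by rewrite opprK.
Qed.

Lemma vl_abs_ge0 (x : X) : le 0 (abs x).
Proof.
have h : le 0 (abs x + abs x).
  by rewrite -(subrr x); apply: vl_le_add2; [apply: avl_sup_l | apply: avl_sup_r].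
have -> : abs x = (2%:R^-1 : R) *: (abs x + abs x).
  by rewrite -mulr2n -scaler_nat scalerA mulVf ?scale1r ?pnatr_eq0.
by apply: avl_le_scale => //; rewrite invr_ge0 ler0n.
Qed.

Lemma vl_abs_id (z : X) : le 0 z -> abs z = z.
Proof.
move=> h; apply: avl_le_anti; last exact: avl_sup_l.
apply: avl_sup_least; first exact: avl_le_refl.
by apply: avl_le_trans (h); move/vl_le_opp: h; rewrite oppr0.
Qed.

Lemma vl_absN (x : X) : abs (- x) = abs x.
Proof. by rewrite /vl_abs opprK vl_supC. Qed.

Lemma vl_abs_eq0 (x : X) : abs x = 0 -> x = 0.
Proof.
move=> h; apply: avl_le_anti; first by rewrite -h; apply: avl_sup_l.
by apply: vl_le_oppP; rewrite oppr0 -h; apply: avl_sup_r.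
Qed.

Lemma vl_abs_triangle (a c : X) : le (abs (a + c)) (abs a + abs c).
Proof.
apply: avl_sup_least; first by apply: vl_le_add2; apply: avl_sup_l.
by rewrite opprD; apply: vl_le_add2; apply: avl_sup_r.
Qed.

Lemma vl_inf_ge0 (a b : X) : le 0 a -> le 0 b -> le 0 (inf a b).
Proof. exact: vl_inf_greatest. Qed.

Lemma vl_inf_subadd (u v w : X) : le 0 u -> le 0 v -> le 0 w ->
  le (inf u (v + w)) (inf u v + inf u w).
Proof.
move=> hu hv hw; set t := inf u (v + w).
suff h : le (t - inf u v) (inf u w).
  by have := avl_le_add (inf u v) h; rewrite subrK addrC.
have -> : t - inf u v = sup (- u + t) (- v + t).
  by rewrite vl_supDr /vl_inf opprK addrC.
apply: avl_sup_least.
  apply: (avl_le_trans (y := 0)); last exact: vl_inf_ge0.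
  by rewrite -(addNr u); apply: vl_le_addl; apply: vl_inf_l.
apply: vl_inf_greatest.
  rewrite -(add0r u); apply: vl_le_add2; last exact: vl_inf_l.
  by rewrite -oppr0; apply: vl_le_opp.
rewrite -[w](addKr v); apply: vl_le_addl; exact: vl_inf_r.
Qed.

Lemma vl_disjointC (x y : X) : vl_disjoint x y -> vl_disjoint y x.
Proof. by rewrite /vl_disjoint vl_infC. Qed.

Lemma vl_disjointxx (x : X) : vl_disjoint x x -> x = 0.
Proof. by rewrite /vl_disjoint vl_infxx; apply: vl_abs_eq0. Qed.

Lemma vl_disjointD (y a c : X) :
  vl_disjoint y a -> vl_disjoint y c -> vl_disjoint y (a + c).
Proof.
rewrite /vl_disjoint => h1 h2; apply: avl_le_anti; last first.
  by apply: vl_inf_ge0; apply: vl_abs_ge0.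
apply: (avl_le_trans (y := inf (abs y) (abs a + abs c))).
  by apply: vl_inf_mono; [apply: avl_le_refl | apply: vl_abs_triangle].
rewrite -(addr0 0) -{1}h1 -h2; apply: vl_inf_subadd; exact: vl_abs_ge0.
Qed.

Lemma vl_disjointN (y c : X) : vl_disjoint y c -> vl_disjoint y (- c).
Proof. by rewrite /vl_disjoint vl_absN. Qed.

Lemma vl_disjoint_subr_eq0 (p a : X) :
  vl_disjoint p a -> vl_disjoint p (a - p) -> p = 0.
Proof.
move=> hpa hpap; apply: vl_disjointxx.
rewrite {2}(_ : p = a + - (a - p)); last by rewrite opprB addrC subrK.
by apply: vl_disjointD => //; apply: vl_disjointN.
Qed.

Lemma vl_band_self (a : X) : vl_band a a.
Proof. by move=> w Hw; apply: vl_disjointC; apply: Hw. Qed.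

Lemma vl_band_le (a z : X) : le 0 z -> le z (abs a) -> vl_band a z.
Proof.
move=> h0 h1 w Hw; have := Hw a erefl; rewrite /vl_disjoint => Hwa.
rewrite vl_abs_id //; apply: avl_le_anti; last first.
  by apply: vl_inf_ge0 => //; apply: vl_abs_ge0.
by rewrite -Hwa vl_infC; apply: vl_inf_mono => //; apply: avl_le_refl.
Qed.

Lemma vl_band_disjoint (a x y : X) :
  vl_band a x -> vl_disjoint y a -> vl_disjoint x y.
Proof. by move=> hx hy; apply: hx => _ ->. Qed.

Lemma vl_band_disjoint_eq0 (a x : X) : vl_band a x -> vl_disjoint x a -> x = 0.
Proof. by move=> hx hxa; apply: vl_disjointxx; apply: vl_band_disjoint hx hxa. Qed.

Lemma vl_lhd_band (u x : X) : vl_band u x -> vl_lhd x u.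
Proof.
move=> hux z hz w Hw; apply: hz => _ ->.
by apply: vl_disjointC; apply: hux.
Qed.

End VectorLatticeFacts.

Section BijectiveOperator.
Variables (R : realType) (X Y : archVL R) (T : X -> Y) (Tinv : Y -> X).
Hypotheses (hTB : {morph T : x y / x - y}) (hTl : cancel T Tinv) (hTr : cancel Tinv T).

Lemma morph0 : T 0 = 0.
Proof. by rewrite -(subrr 0) hTB subrr. Qed.

Lemma beta_inv_disjointness_preserving :
  sufficiently_many_components X ->
  disjointness_preserving T -> condition_beta Tinv.
Proof.
move=> hX DP a b hab; apply: vl_lhd_band.
apply: NNPP => hn; have [x' [x'_neq0 [x'_comp x'_dis]]] := hX _ _ hn.
have pap : vl_disjoint (T x') (a - T x') by have := DP _ _ x'_comp; rewrite hTB hTr.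
have pb : vl_disjoint (T x') b by have := DP _ _ x'_dis; rewrite hTr.
have pa : vl_disjoint (T x') a.
  by apply: vl_disjointC; apply: vl_band_disjoint pb; apply: hab; apply: vl_band_self.
apply: x'_neq0; rewrite -(hTl x') (vl_disjoint_subr_eq0 pa pap).
by rewrite -morph0 hTl.
Qed.

Lemma disjointness_preserving_beta_inv :
  condition_beta Tinv -> disjointness_preserving T.
Proof.
move=> beta x y hxy; set z := vl_inf (vl_abs (T x)) (vl_abs (T y)).
have z_ge0 : avl_le 0 z by apply: vl_inf_ge0; apply: vl_abs_ge0.
have zx : vl_band x (Tinv z).
  rewrite -[x]hTl; apply: (beta z (T x)); last exact: vl_band_self.
  by apply: vl_lhd_band; apply: vl_band_le => //; apply: vl_inf_l.
have zy : vl_band y (Tinv z).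
  rewrite -[y]hTl; apply: (beta z (T y)); last exact: vl_band_self.
  by apply: vl_lhd_band; apply: vl_band_le => //; apply: vl_inf_r.
have z_dis_y : vl_disjoint (Tinv z) y by apply: vl_band_disjoint zx (vl_disjointC hxy).
by rewrite /vl_disjoint -/z -[z]hTr (vl_band_disjoint_eq0 zy z_dis_y) morph0.
Qed.

End BijectiveOperator.

Theorem theorem3p4 (R : realType) (X Y : archVL R) (T : X -> Y)
  (Tinv : Y -> X)
  (hT : linear T) (hTl : cancel T Tinv) (hTr : cancel Tinv T)
  (hX : sufficiently_many_components X) :
  disjointness_preserving T <-> condition_beta Tinv.
Proof.
have hTB := zmod_morphism_linear hT.
split; first exact: beta_inv_disjointness_preserving.
exact: disjointness_preserving_beta_inv.
Qed.
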